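(* Let $L$ be a pentagonal linkage and let $q_1,q_2,q_4>0$ be fixed. Place charges $(q_1,q_2,t,q_4,s)$ at the vertices $A_1,\dots,A_5$, giving the effective Coulomb potential $$E=\frac{q_1q_4}{|A_1A_4|}+\frac{q_2q_4}{|A_2A_4|}+\frac{q_1t}{|A_1A_3|}+\frac{q_2s}{|A_2A_5|}+\frac{st}{|A_3A_5|}.$$ Then for each convex configuration $P\in M^C(L)$ there exists exactly one pair $(s,t)\in(\mathbb{R}_{>0})^2$ such that $P$ is a critical point of $E$ on $M(L)$.
   Context: A pentagonal linkage $L$ is given by side lengths $a_1,\dots,a_5>0$; $M(L)$ is the set of planar 5-gons $(A_1,\dots,A_5)$ with $|A_iA_{i+1}|=a_i$ (indices mod 5) modulo all isometries of $\mathbb{R}^2$. $M^C(L)$ is the set of strictly convex configurations (convex pentagon $A_1\dots A_5$ in this cyclic order, no angle equal to $\pi$); near such points $M(L)$ is a smooth surface, and a critical point means the differential of $E$ restricted to $M(L)$ vanishes there. *)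

From Stdlib Require Import Reals Lra.
From Coquelicot Require Import Coquelicot.
Open Scope R_scope.

(* A planar 5-gon (A_1,...,A_5) is represented by P : nat -> R*R with
   A_{k+1} = P k for k = 0..4 (values at other indices are irrelevant). *)
Definition config := nat -> (R * R).

Definition dist (p q : R * R) : R :=
  sqrt ((fst p - fst q) ^ 2 + (snd p - snd q) ^ 2).

Definition nxt (i : nat) : nat := Nat.modulo (S i) 5.

(* P lies in (a representative of) M(L): |A_i A_{i+1}| = a_i (indices mod 5). *)
Definition in_linkage (a : nat -> R) (P : config) : Prop :=
  forall i, (i < 5)%nat -> dist (P i) (P (nxt i)) = a i.

Definition cross (u v : R * R) : R := fst u * snd v - snd u * fst v.
Definition vsub (p q : R * R) : R * R := (fst p - fst q, snd p - snd q).

(* Strictly convex pentagon A_1...A_5 in this cyclic order (no angle = pi):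
   for every side A_i A_{i+1}, all other vertices lie strictly on one and the
   same side (the same side for all i, given by the orientation sgn). *)
Definition strictly_convex (P : config) : Prop :=
  exists sgn : R, (sgn = 1 \/ sgn = -1) /\
    forall i j, (i < 5)%nat -> (j < 5)%nat -> j <> i -> j <> nxt i ->
      0 < sgn * cross (vsub (P (nxt i)) (P i)) (vsub (P j) (P i)).

Definition energy (q1 q2 q4 s t : R) (P : config) : R :=
  q1 * q4 / dist (P 0%nat) (P 3%nat) + q2 * q4 / dist (P 1%nat) (P 3%nat)
  + q1 * t / dist (P 0%nat) (P 2%nat) + q2 * s / dist (P 1%nat) (P 4%nat)
  + s * t / dist (P 2%nat) (P 4%nat).

Definition perturb (P v : config) (h : R) : config :=
  fun i => (fst (P i) + h * fst (v i), snd (P i) + h * snd (v i)).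

(* P is a critical point of f on M(L): the differential of f vanishes on the
   tangent space of the constraint set {|A_iA_{i+1}| = a_i}, i.e. on every
   direction v along which all side lengths are stationary to first order.
   (f is isometry invariant, so this is criticality on the quotient M(L),
   which is smooth near strictly convex configurations.) *)
Definition critical_on_linkage (f : config -> R) (P : config) : Prop :=
  forall v : config,
    (forall i, (i < 5)%nat ->
       is_derive (fun h => dist (perturb P v h i) (perturb P v h (nxt i))) 0 0) ->
    is_derive (fun h => f (perturb P v h)) 0 0.

(* Criticality only has to be tested along infinitesimal flexes of the
   pentagon.  Modulo infinitesimal isometries, which the energy does not see,
   these form a plane spanned by two explicit flexes, one moving only A3 and
   A4 and one moving only A4 and A5.  Along them the derivative of E gives the
   two equations  t (A + B s) = C  and  s (A' + B' t) = D,  whose coefficients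
   are products of signed areas of triangles spanned by an edge and a further
   vertex of the pentagon; strict convexity makes all these areas have the same
   sign, so the coefficients are positive.  Eliminating t leaves a quadratic
   in s with positive leading and negative constant coefficient, which has
   exactly one positive root. *)

From Pilot Require Import Defs.
From Stdlib Require Import Reals Lra Lia.
From Coquelicot Require Import Coquelicot.
Open Scope R_scope.

(* The rate of change of |pq|^2 / 2 when p and q move with velocities u and w. *)
Definition strain (p q u w : R * R) : R :=
  (fst p - fst q) * (fst u - fst w) + (snd p - snd q) * (snd u - snd w).

Definition orient (P : config) (i j k : nat) : R :=
  cross (vsub (P j) (P i)) (vsub (P k) (P i)).

Definition rot90 (c : R) (u : R * R) : R * R := (- (c * snd u), c * fst u).

Definition is_flex (P v : config) : Prop :=
  forall i, (i < 5)%nat -> strain (P i) (P (nxt i)) (v i) (v (nxt i)) = 0.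

(* A3 turns about A2 and A4 about A5, at speeds making |A3A4| stationary;
   likewise A4 turns about A3 and A5 about A1 below. *)
Definition flex_A3A4 (P : config) : config := fun i =>
  match i with
  | 2%nat => rot90 (orient P 2 3 4) (vsub (P 2%nat) (P 1%nat))
  | 3%nat => rot90 (orient P 2 3 1) (vsub (P 3%nat) (P 4%nat))
  | _ => (0, 0)
  end.

Definition flex_A4A5 (P : config) : config := fun i =>
  match i with
  | 3%nat => rot90 (orient P 3 4 0) (vsub (P 3%nat) (P 2%nat))
  | 4%nat => rot90 (orient P 2 3 4) (vsub (P 4%nat) (P 0%nat))
  | _ => (0, 0)
  end.

(* An infinitesimal isometry (translation c, rotation speed w) plus a
   combination of the two flexes above. *)
Definition flex_comb (P : config) (c : R * R) (w a b : R) (i : nat) : R * R :=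
  (fst c - w * snd (P i) + a * fst (flex_A3A4 P i) + b * fst (flex_A4A5 P i),
   snd c + w * fst (P i) + a * snd (flex_A3A4 P i) + b * snd (flex_A4A5 P i)).

Definition diag_form (w03 w13 w02 w14 w24 : R) (P v : config) : R :=
  w03 * strain (P 0%nat) (P 3%nat) (v 0%nat) (v 3%nat)
  + w13 * strain (P 1%nat) (P 3%nat) (v 1%nat) (v 3%nat)
  + w02 * strain (P 0%nat) (P 2%nat) (v 0%nat) (v 2%nat)
  + w14 * strain (P 1%nat) (P 4%nat) (v 1%nat) (v 4%nat)
  + w24 * strain (P 2%nat) (P 4%nat) (v 2%nat) (v 4%nat).

Definition energy_form (q1 q2 q4 s t : R) (P v : config) : R :=
  diag_form (q1 * q4 / Defs.dist (P 0%nat) (P 3%nat) ^ 3)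
    (q2 * q4 / Defs.dist (P 1%nat) (P 3%nat) ^ 3) (q1 * t / Defs.dist (P 0%nat) (P 2%nat) ^ 3)
    (q2 * s / Defs.dist (P 1%nat) (P 4%nat) ^ 3) (s * t / Defs.dist (P 2%nat) (P 4%nat) ^ 3) P v.

Lemma is_derive_sqrt_sum_sq (X Y A B : R) : 0 < X ^ 2 + Y ^ 2 ->
  is_derive (fun h => sqrt ((X + h * A) ^ 2 + (Y + h * B) ^ 2)) 0
    ((X * A + Y * B) / sqrt (X ^ 2 + Y ^ 2)).
Proof.
  intros H.
  assert (Hf : is_derive (fun h => (X + h * A) ^ 2 + (Y + h * B) ^ 2) 0 (2 * (X * A + Y * B)))
    by (auto_derive; auto; ring).
  assert (E0 : (X + 0 * A) ^ 2 + (Y + 0 * B) ^ 2 = X ^ 2 + Y ^ 2) by ring.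
  pose proof (is_derive_sqrt _ _ _ Hf) as Hs. cbv beta in Hs. rewrite E0 in Hs.
  replace ((X * A + Y * B) / sqrt (X ^ 2 + Y ^ 2))
    with (2 * (X * A + Y * B) / (2 * sqrt (X ^ 2 + Y ^ 2))).
  - exact (Hs H).
  - field. apply Rgt_not_eq, sqrt_lt_R0, H.
Qed.

Lemma dist_perturb0 (P v : config) i j :
  Defs.dist (perturb P v 0 i) (perturb P v 0 j) = Defs.dist (P i) (P j).
Proof. unfold Defs.dist, perturb; simpl. f_equal; ring. Qed.

Lemma dist_pos_sqsum (p q : R * R) :
  0 < Defs.dist p q -> 0 < (fst p - fst q) ^ 2 + (snd p - snd q) ^ 2.
Proof.
  unfold Defs.dist. intros H.
  destruct (Rle_lt_dec ((fst p - fst q) ^ 2 + (snd p - snd q) ^ 2) 0) as [Hle|]; auto.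
  rewrite sqrt_neg_0 in H; lra.
Qed.

Lemma is_derive_dist_perturb (P v : config) i j : 0 < Defs.dist (P i) (P j) ->
  is_derive (fun h => Defs.dist (perturb P v h i) (perturb P v h j)) 0
    (strain (P i) (P j) (v i) (v j) / Defs.dist (P i) (P j)).
Proof.
  intros Hd.
  apply (is_derive_ext (fun h => sqrt ((fst (P i) - fst (P j) + h * (fst (v i) - fst (v j))) ^ 2
                                     + (snd (P i) - snd (P j) + h * (snd (v i) - snd (v j))) ^ 2))).
  - intros h. unfold Defs.dist, perturb; simpl. f_equal; ring.
  - exact (is_derive_sqrt_sum_sq _ _ _ _ (dist_pos_sqsum _ _ Hd)).
Qed.

Lemma is_derive_inv_dist_perturb (P v : config) i j c : 0 < Defs.dist (P i) (P j) ->
  is_derive (fun h => c / Defs.dist (perturb P v h i) (perturb P v h j)) 0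
    (- (c / Defs.dist (P i) (P j) ^ 3 * strain (P i) (P j) (v i) (v j))).
Proof.
  intros Hd.
  pose proof (is_derive_inv _ _ _ (is_derive_dist_perturb P v i j Hd)) as Hinv.
  cbv beta in Hinv. rewrite dist_perturb0 in Hinv.
  pose proof (is_derive_scal _ _ c _ (Hinv ltac:(lra))) as Hc.
  replace (- (c / Defs.dist (P i) (P j) ^ 3 * strain (P i) (P j) (v i) (v j)))
    with (c * (- (strain (P i) (P j) (v i) (v j) / Defs.dist (P i) (P j))
                / Defs.dist (P i) (P j) ^ 2)) by (field; lra).
  exact Hc.
Qed.

Lemma is_derive_energy_perturb (q1 q2 q4 s t : R) (P v : config) :
  0 < Defs.dist (P 0%nat) (P 3%nat) -> 0 < Defs.dist (P 1%nat) (P 3%nat) ->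
  0 < Defs.dist (P 0%nat) (P 2%nat) -> 0 < Defs.dist (P 1%nat) (P 4%nat) ->
  0 < Defs.dist (P 2%nat) (P 4%nat) ->
  is_derive (fun h => energy q1 q2 q4 s t (perturb P v h)) 0 (- energy_form q1 q2 q4 s t P v).
Proof.
  intros H03 H13 H02 H14 H24.
  replace (- energy_form q1 q2 q4 s t P v) with
    (- (q1 * q4 / Defs.dist (P 0%nat) (P 3%nat) ^ 3 * strain (P 0%nat) (P 3%nat) (v 0%nat) (v 3%nat))
     + - (q2 * q4 / Defs.dist (P 1%nat) (P 3%nat) ^ 3 * strain (P 1%nat) (P 3%nat) (v 1%nat) (v 3%nat))
     + - (q1 * t / Defs.dist (P 0%nat) (P 2%nat) ^ 3 * strain (P 0%nat) (P 2%nat) (v 0%nat) (v 2%nat))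
     + - (q2 * s / Defs.dist (P 1%nat) (P 4%nat) ^ 3 * strain (P 1%nat) (P 4%nat) (v 1%nat) (v 4%nat))
     + - (s * t / Defs.dist (P 2%nat) (P 4%nat) ^ 3 * strain (P 2%nat) (P 4%nat) (v 2%nat) (v 4%nat)))
    by (unfold energy_form, diag_form; ring).
  unfold energy.
  repeat apply (is_derive_plus (V := R_NormedModule)); apply is_derive_inv_dist_perturb; assumption.
Qed.

Lemma is_derive_eq (f : R -> R) (x l l' : R) : is_derive f x l -> is_derive f x l' -> l = l'.
Proof. intros H H'. rewrite <- (is_derive_unique _ _ _ H), (is_derive_unique _ _ _ H'). reflexivity. Qed.

Lemma is_derive_dist_perturb0_iff (P v : config) i j : 0 < Defs.dist (P i) (P j) ->
  is_derive (fun h => Defs.dist (perturb P v h i) (perturb P v h j)) 0 0 <->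
  strain (P i) (P j) (v i) (v j) = 0.
Proof.
  intros Hd. pose proof (is_derive_dist_perturb P v i j Hd) as H. split.
  - intros H0. pose proof (is_derive_eq _ _ _ _ H H0) as E.
    apply (Rmult_eq_reg_r (/ Defs.dist (P i) (P j))); [lra |].
    apply Rinv_neq_0_compat; lra.
  - intros E. rewrite E in H. replace 0 with (0 / Defs.dist (P i) (P j)) at 2 by (field; lra).
    exact H.
Qed.

Lemma nxt_spec i : (i < 5)%nat -> (nxt i < 5)%nat /\ i <> nxt i.
Proof. intros Hi. destruct i as [|[|[|[|[|i]]]]]; cbv; lia. Qed.

Lemma critical_iff_flex (q1 q2 q4 s t : R) (P : config) :
  (forall i j, (i < 5)%nat -> (j < 5)%nat -> i <> j -> 0 < Defs.dist (P i) (P j)) ->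
  critical_on_linkage (energy q1 q2 q4 s t) P <->
  forall v, is_flex P v -> energy_form q1 q2 q4 s t P v = 0.
Proof.
  intros Hd.
  assert (HE : forall v, is_derive (fun h => energy q1 q2 q4 s t (perturb P v h)) 0
                           (- energy_form q1 q2 q4 s t P v))
    by (intros v; apply is_derive_energy_perturb; apply Hd; lia).
  assert (Hflex : forall v, is_flex P v <-> forall i, (i < 5)%nat ->
            is_derive (fun h => Defs.dist (perturb P v h i) (perturb P v h (nxt i))) 0 0).
  { intros v. split; intros H i Hi; specialize (H i Hi); destruct (nxt_spec i Hi);
      rewrite (is_derive_dist_perturb0_iff P v i (nxt i)) in *; auto. }
  unfold critical_on_linkage. split.
  - intros Hc v Hv. pose proof (is_derive_eq _ _ _ _ (HE v) (Hc v (proj1 (Hflex v) Hv))). lra.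
  - intros Hc v Hv. pose proof (HE v) as H. rewrite (Hc v (proj2 (Hflex v) Hv)), Ropp_0 in H.
    exact H.
Qed.

Lemma orient_cycle P i j k : orient P i j k = orient P j k i.
Proof. unfold orient, cross, vsub; simpl; ring. Qed.

Lemma sqsum_eq0 (a b : R) : a ^ 2 + b ^ 2 = 0 -> a = 0 /\ b = 0.
Proof. intros H. split; nra. Qed.

Lemma orient_sqdist_neq0 P i j k : orient P i j k <> 0 ->
  (fst (P j) - fst (P i)) ^ 2 + (snd (P j) - snd (P i)) ^ 2 <> 0.
Proof.
  unfold orient, cross, vsub; simpl. intros H E. apply H.
  destruct (sqsum_eq0 _ _ E) as [Ex Ey].
  replace (fst (P j)) with (fst (P i)) by lra. replace (snd (P j)) with (snd (P i)) by lra.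
  ring.
Qed.

Lemma orient_swap P i j k : orient P i j k = - orient P i k j.
Proof. unfold orient, cross, vsub; simpl; ring. Qed.

Lemma orient_neq0_dist_pos P i j k : orient P i j k <> 0 -> 0 < Defs.dist (P i) (P j).
Proof.
  intros H. apply sqrt_lt_R0.
  pose proof (orient_sqdist_neq0 _ _ _ _ H).
  assert (E : (fst (P i) - fst (P j)) ^ 2 + (snd (P i) - snd (P j)) ^ 2
              = (fst (P j) - fst (P i)) ^ 2 + (snd (P j) - snd (P i)) ^ 2) by ring.
  rewrite E. pose proof (pow2_ge_0 (fst (P j) - fst (P i))).
  pose proof (pow2_ge_0 (snd (P j) - snd (P i))). lra.
Qed.

Lemma orth_param (k ux uy x y x' y' : R) :
  k <> 0 -> ux ^ 2 + uy ^ 2 <> 0 -> ux * (x - x') + uy * (y - y') = 0 ->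
  exists l, x = x' - l * (k * uy) /\ y = y' + l * (k * ux).
Proof.
  intros Hk Hu H. set (N := ux ^ 2 + uy ^ 2) in *. set (m := ux * (y - y') - uy * (x - x')).
  exists (m / (k * N)).
  assert (Ex : (x - x') * N = - (m * uy)).
  { transitivity (ux * (ux * (x - x') + uy * (y - y')) - m * uy); [unfold N, m; ring |].
    rewrite H; ring. }
  assert (Ey : (y - y') * N = m * ux).
  { transitivity (uy * (ux * (x - x') + uy * (y - y')) + m * ux); [unfold N, m; ring |].
    rewrite H; ring. }
  split; apply (Rmult_eq_reg_r N); auto.
  - replace ((x' - m / (k * N) * (k * uy)) * N) with (x' * N - m * uy) by (field; auto). lra.
  - replace ((y' + m / (k * N) * (k * ux)) * N) with (y' * N + m * ux) by (field; auto). lra.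
Qed.

Lemma orth_indep_eq (ux uy wx wy x y x' y' : R) :
  ux * wy - uy * wx <> 0 ->
  ux * (x - x') + uy * (y - y') = 0 -> wx * (x - x') + wy * (y - y') = 0 ->
  (x, y) = (x', y').
Proof.
  intros Hd Hu Hw. f_equal; apply (Rmult_eq_reg_r (ux * wy - uy * wx)); auto.
  - transitivity (x' * (ux * wy - uy * wx)
      + (wy * (ux * (x - x') + uy * (y - y')) - uy * (wx * (x - x') + wy * (y - y'))));
      [ring | rewrite Hu, Hw; ring].
  - transitivity (y' * (ux * wy - uy * wx)
      + (ux * (wx * (x - x') + wy * (y - y')) - wx * (ux * (x - x') + uy * (y - y'))));
      [ring | rewrite Hu, Hw; ring].
Qed.

Lemma is_flex_A3A4 P : is_flex P (flex_A3A4 P).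
Proof.
  intros i Hi. destruct i as [|[|[|[|[|i]]]]]; try lia;
    unfold nxt, strain, flex_A3A4, rot90, orient, cross, vsub; simpl; ring.
Qed.

Lemma is_flex_A4A5 P : is_flex P (flex_A4A5 P).
Proof.
  intros i Hi. destruct i as [|[|[|[|[|i]]]]]; try lia;
    unfold nxt, strain, flex_A4A5, rot90, orient, cross, vsub; simpl; ring.
Qed.

Ltac zero_by k c :=
  lazymatch type of k with ?K = 0 => transitivity (c * K); [ring | rewrite k; ring] end.

Lemma flex_span (P v : config) :
  orient P 0 1 2 <> 0 -> orient P 4 0 1 <> 0 -> orient P 2 3 4 <> 0 -> is_flex P v ->
  exists c w a b, forall i, (i < 5)%nat -> v i = flex_comb P c w a b i.
Proof.
  intros H012 H401 H234 Hv.
  enough (exists c w a b, v 0%nat = flex_comb P c w a b 0 /\ v 1%nat = flex_comb P c w a b 1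
    /\ v 2%nat = flex_comb P c w a b 2 /\ v 3%nat = flex_comb P c w a b 3
    /\ v 4%nat = flex_comb P c w a b 4) as (c & w & a & b & E0 & E1 & E2 & E3 & E4).
  { exists c, w, a, b. intros [|[|[|[|[|i]]]]] Hi; auto; lia. }
  pose proof (orient_sqdist_neq0 _ _ _ _ H012) as N01.
  rewrite orient_cycle in H012.
  pose proof (orient_sqdist_neq0 _ _ _ _ H012) as N12.
  pose proof (orient_sqdist_neq0 _ _ _ _ H401) as N40.
  pose proof (Hv 0%nat ltac:(lia)) as k0. pose proof (Hv 1%nat ltac:(lia)) as k1.
  pose proof (Hv 2%nat ltac:(lia)) as k2. pose proof (Hv 3%nat ltac:(lia)) as k3.
  pose proof (Hv 4%nat ltac:(lia)) as k4. clear Hv H012 H401.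
  unfold nxt, strain, flex_comb, flex_A3A4, flex_A4A5, rot90, orient, cross, vsub in *.
  simpl in *.
  destruct (P 0%nat) as [x0 y0], (P 1%nat) as [x1 y1], (P 2%nat) as [x2 y2],
    (P 3%nat) as [x3 y3], (P 4%nat) as [x4 y4].
  destruct (v 0%nat) as [a0 b0], (v 1%nat) as [a1 b1], (v 2%nat) as [a2 b2],
    (v 3%nat) as [a3 b3], (v 4%nat) as [a4 b4].
  simpl in *.
  (* The rotation speed w is read off the edge A1A2; relative to the rigid
     motion, A3 then turns about A2 and A5 about A1 (speeds a, b), and the
     velocity of A4 is forced by the two edges at A4, which are independent. *)
  set (o := (x3 - x2) * (y4 - y2) - (y3 - y2) * (x4 - x2)) in *.
  destruct (orth_param 1 (x1 - x0) (y1 - y0) a1 b1 a0 b0) as [w [-> ->]];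
    [lra | exact N01 | zero_by k0 1 |].
  destruct (orth_param o (x2 - x1) (y2 - y1) a2 b2 (a0 - w * (y2 - y0)) (b0 + w * (x2 - x0)))
    as [a [-> ->]]; [exact H234 | exact N12 | zero_by k1 1 |].
  destruct (orth_param o (x0 - x4) (y0 - y4) a4 b4 (a0 - w * (y4 - y0)) (b0 + w * (x4 - x0)))
    as [b [-> ->]]; [exact H234 | exact N40 | zero_by k4 (-1) |].
  exists (a0 + w * y0, b0 - w * x0), w, a, (- b); simpl.
  repeat split; try (f_equal; ring).
  unfold o in *.
  apply (orth_indep_eq (x3 - x2) (y3 - y2) (x3 - x4) (y3 - y4));
    [intro E; apply H234; lra | zero_by k2 1 | zero_by k3 1].
Qed.

Lemma diag_form_flex_A3A4 w03 w13 w02 w14 w24 P :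
  diag_form w03 w13 w02 w14 w24 P (flex_A3A4 P) =
  orient P 2 3 1 * (w03 * orient P 3 4 0 + w13 * orient P 3 4 1)
  - orient P 2 3 4 * (w02 * orient P 1 2 0 + w24 * orient P 1 2 4).
Proof. unfold diag_form, strain, flex_A3A4, orient, rot90, cross, vsub; simpl; ring. Qed.

Lemma diag_form_flex_A4A5 w03 w13 w02 w14 w24 P :
  diag_form w03 w13 w02 w14 w24 P (flex_A4A5 P) =
  orient P 2 3 4 * (w14 * orient P 4 0 1 + w24 * orient P 4 0 2)
  - orient P 3 4 0 * (w03 * orient P 2 3 0 + w13 * orient P 2 3 1).
Proof. unfold diag_form, strain, flex_A4A5, orient, rot90, cross, vsub; simpl; ring. Qed.

Lemma diag_form_flex_comb w03 w13 w02 w14 w24 P c w a b :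
  diag_form w03 w13 w02 w14 w24 P (flex_comb P c w a b) =
  a * diag_form w03 w13 w02 w14 w24 P (flex_A3A4 P)
  + b * diag_form w03 w13 w02 w14 w24 P (flex_A4A5 P).
Proof. unfold diag_form, strain, flex_comb; simpl; ring. Qed.

Lemma diag_form_ext w03 w13 w02 w14 w24 P v v' :
  (forall i, (i < 5)%nat -> v i = v' i) ->
  diag_form w03 w13 w02 w14 w24 P v = diag_form w03 w13 w02 w14 w24 P v'.
Proof. intros H. unfold diag_form. rewrite !H by lia. reflexivity. Qed.

Lemma diag_form_on_flexes_iff w03 w13 w02 w14 w24 P :
  orient P 0 1 2 <> 0 -> orient P 4 0 1 <> 0 -> orient P 2 3 4 <> 0 ->
  (forall v, is_flex P v -> diag_form w03 w13 w02 w14 w24 P v = 0) <->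
  diag_form w03 w13 w02 w14 w24 P (flex_A3A4 P) = 0 /\
  diag_form w03 w13 w02 w14 w24 P (flex_A4A5 P) = 0.
Proof.
  intros H012 H401 H234. split.
  - intros H. split; apply H; [apply is_flex_A3A4 | apply is_flex_A4A5].
  - intros [E1 E2] v Hv.
    destruct (flex_span P v H012 H401 H234 Hv) as (c & w & a & b & Ev).
    rewrite (diag_form_ext _ _ _ _ _ P v (flex_comb P c w a b) Ev), diag_form_flex_comb, E1, E2.
    ring.
Qed.

Lemma strictly_convex_orient_neq0 P i j : strictly_convex P ->
  (i < 5)%nat -> (j < 5)%nat -> j <> i -> j <> nxt i -> orient P i (nxt i) j <> 0.
Proof.
  intros [sg [_ Hsg]] Hi Hj Hji Hjn E. specialize (Hsg i j Hi Hj Hji Hjn).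
  unfold orient in E. rewrite E in Hsg. lra.
Qed.

Lemma strictly_convex_orient_mul_pos P i j k l : strictly_convex P ->
  (i < 5)%nat -> (j < 5)%nat -> j <> i -> j <> nxt i ->
  (k < 5)%nat -> (l < 5)%nat -> l <> k -> l <> nxt k ->
  0 < orient P i (nxt i) j * orient P k (nxt k) l.
Proof.
  intros [sg [Hsg Hcv]] Hi Hj Hji Hjn Hk Hl Hlk Hln.
  pose proof (Hcv i j Hi Hj Hji Hjn). pose proof (Hcv k l Hk Hl Hlk Hln).
  unfold orient. destruct Hsg as [-> | ->]; nra.
Qed.

Lemma strictly_convex_dist_pos P : strictly_convex P ->
  forall i j, (i < 5)%nat -> (j < 5)%nat -> i <> j -> 0 < Defs.dist (P i) (P j).
Proof.
  intros Hcvx i j Hi Hj Hij.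
  destruct (Nat.eq_dec j (nxt i)) as [-> | Hjn].
  - apply (orient_neq0_dist_pos P i (nxt i) (nxt (nxt i))).
    apply strictly_convex_orient_neq0; auto; destruct i as [|[|[|[|[|i]]]]]; cbv; lia.
  - apply (orient_neq0_dist_pos P i j (nxt i)). rewrite orient_swap.
    apply Ropp_neq_0_compat, strictly_convex_orient_neq0; auto.
Qed.

Lemma quadratic_pos_root_unique (a b c x y : R) : 0 < a -> c < 0 -> 0 < x -> 0 < y ->
  a * x ^ 2 + b * x + c = 0 -> a * y ^ 2 + b * y + c = 0 -> x = y.
Proof.
  intros Ha Hc Hx Hy Ex Ey.
  destruct (Req_dec x y) as [| Hne]; auto. exfalso.
  assert (Hsum : a * (x + y) + b = 0).
  { apply (Rmult_eq_reg_l (x - y)); [| lra].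
    transitivity ((a * x ^ 2 + b * x + c) - (a * y ^ 2 + b * y + c)); [ring |].
    rewrite Ex, Ey. ring. }
  (* Vieta: x y = c / a < 0. *)
  assert (c = a * x * y) by (replace b with (- (a * (x + y))) in Ex by lra; lra).
  assert (0 < a * x * y) by (apply Rmult_lt_0_compat; [apply Rmult_lt_0_compat |]; lra).
  lra.
Qed.

Lemma quadratic_pos_root_exists (a b c : R) : 0 < a -> c < 0 ->
  exists x, 0 < x /\ a * x ^ 2 + b * x + c = 0.
Proof.
  intros Ha Hc.
  assert (Hdisc : b ^ 2 < b ^ 2 - 4 * a * c) by nra.
  set (r := sqrt (b ^ 2 - 4 * a * c)).
  assert (Hr : r * r = b ^ 2 - 4 * a * c) by (apply sqrt_sqrt; nra).
  assert (Hr0 : 0 <= r) by apply sqrt_pos.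
  assert (Hrb : b < r) by nra.
  exists ((r - b) / (2 * a)). split.
  - apply Rdiv_lt_0_compat; lra.
  - apply (Rmult_eq_reg_r (4 * a)); [| lra].
    transitivity (r * r - (b ^ 2 - 4 * a * c)); [field; lra |].
    rewrite Hr. ring.
Qed.

Lemma pos_system_iff_quadratic (A B C A' B' D s t : R) : 0 < A + B * s ->
  t * (A + B * s) = C /\ s * (A' + B' * t) = D <->
  t = C / (A + B * s) /\ A' * B * s ^ 2 + (A' * A + B' * C - D * B) * s - D * A = 0.
Proof.
  intros Hs. split.
  - intros [E1 E2]. split; [rewrite <- E1; field; lra |].
    rewrite <- E1, <- E2. ring.
  - intros [-> Eq]. split; [field; lra |].
    apply (Rmult_eq_reg_r (A + B * s)); [| lra].
    transitivity (A' * B * s ^ 2 + (A' * A + B' * C - D * B) * s - D * A + D * (A + B * s));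
      [field; lra | rewrite Eq; ring].
Qed.

Lemma pos_system_unique_solution (A B C A' B' D : R) :
  0 < A -> 0 < B -> 0 < C -> 0 < A' -> 0 < B' -> 0 < D ->
  exists s t, (0 < s /\ 0 < t /\ t * (A + B * s) = C /\ s * (A' + B' * t) = D) /\
    forall s' t', 0 < s' -> 0 < t' -> t' * (A + B * s') = C -> s' * (A' + B' * t') = D ->
      s' = s /\ t' = t.
Proof.
  intros HA HB HC HA' HB' HD.
  assert (HAB : forall s, 0 < s -> 0 < A + B * s) by (intros; nra).
  assert (Ha : 0 < A' * B) by nra. assert (Hc : - (D * A) < 0) by nra.
  destruct (quadratic_pos_root_exists _ (A' * A + B' * C - D * B) _ Ha Hc) as [s [Hs Eq]].
  exists s, (C / (A + B * s)).
  split.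
  - assert (Ht : 0 < C / (A + B * s)) by (apply Rdiv_lt_0_compat; auto).
    rewrite (pos_system_iff_quadratic _ _ _ _ _ _ _ _ (HAB s Hs)). repeat split; auto; lra.
  - intros s' t' Hs' Ht' E1 E2.
    destruct (proj1 (pos_system_iff_quadratic _ _ _ _ _ _ _ _ (HAB s' Hs')) (conj E1 E2))
      as [-> Eq'].
    assert (s' = s) as ->.
    { apply (quadratic_pos_root_unique (A' * B) (A' * A + B' * C - D * B) (- (D * A))); auto;
        lra. }
    split; reflexivity.
Qed.

Lemma pos_div_cube_mul (a d x : R) : 0 < a -> 0 < d -> 0 < x -> 0 < a / d ^ 3 * x.
Proof. intros. apply Rmult_lt_0_compat; auto. apply Rdiv_lt_0_compat; auto. apply pow_lt; auto. Qed.

Lemma sub_eq0_iff (x l r : R) : x = l - r -> (x = 0 <-> l = r).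
Proof. intros ->. split; intros; lra. Qed.

Lemma critical_iff_pos_system (q1 q2 q4 : R) (P : config) :
  0 < q1 -> 0 < q2 -> 0 < q4 -> strictly_convex P ->
  exists A B C A' B' D, 0 < A /\ 0 < B /\ 0 < C /\ 0 < A' /\ 0 < B' /\ 0 < D /\
    forall s t, critical_on_linkage (energy q1 q2 q4 s t) P <->
      t * (A + B * s) = C /\ s * (A' + B' * t) = D.
Proof.
  intros Hq1 Hq2 Hq4 Hcvx.
  pose proof (strictly_convex_dist_pos P Hcvx) as Hd.
  set (d03 := Defs.dist (P 0%nat) (P 3%nat)). set (d13 := Defs.dist (P 1%nat) (P 3%nat)).
  set (d02 := Defs.dist (P 0%nat) (P 2%nat)). set (d14 := Defs.dist (P 1%nat) (P 4%nat)).
  set (d24 := Defs.dist (P 2%nat) (P 4%nat)).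
  assert (0 < d03 /\ 0 < d13 /\ 0 < d02 /\ 0 < d14 /\ 0 < d24) as (H03 & H13 & H02 & H14 & H24)
    by (repeat split; apply Hd; lia).
  set (A := q1 / d02 ^ 3 * (orient P 2 3 4 * orient P 1 2 0)).
  set (B := 1 / d24 ^ 3 * (orient P 2 3 4 * orient P 1 2 4)).
  set (C := q1 * q4 / d03 ^ 3 * (orient P 2 3 1 * orient P 3 4 0)
            + q2 * q4 / d13 ^ 3 * (orient P 2 3 1 * orient P 3 4 1)).
  set (A' := q2 / d14 ^ 3 * (orient P 2 3 4 * orient P 4 0 1)).
  set (B' := 1 / d24 ^ 3 * (orient P 2 3 4 * orient P 4 0 2)).
  set (D := q1 * q4 / d03 ^ 3 * (orient P 3 4 0 * orient P 2 3 0)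
            + q2 * q4 / d13 ^ 3 * (orient P 3 4 0 * orient P 2 3 1)).
  exists A, B, C, A', B', D.
  do 6 (split; [repeat apply Rplus_lt_0_compat; apply pos_div_cube_mul;
                first [assumption | apply strictly_convex_orient_mul_pos; auto; cbv; lia | nra] |]).
  intros s t.
  rewrite (critical_iff_flex q1 q2 q4 s t P Hd). unfold energy_form.
  rewrite diag_form_on_flexes_iff by (apply strictly_convex_orient_neq0; auto; cbv; lia).
  rewrite diag_form_flex_A3A4, diag_form_flex_A4A5.
  rewrite (sub_eq0_iff _ C (t * (A + B * s)))
    by (unfold A, B, C, d03, d13, d02, d14, d24, Rdiv; ring).
  rewrite (sub_eq0_iff _ (s * (A' + B' * t)) D)
    by (unfold A', B', D, d03, d13, d02, d14, d24, Rdiv; ring).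
  split; intros [E1 E2]; split; auto.
Qed.

Theorem theorem3 (a : nat -> R) (q1 q2 q4 : R) (P : config) :
  (forall i, (i < 5)%nat -> 0 < a i) ->
  0 < q1 -> 0 < q2 -> 0 < q4 ->
  in_linkage a P -> strictly_convex P ->
  exists s t : R, (0 < s /\ 0 < t /\ critical_on_linkage (energy q1 q2 q4 s t) P) /\
    forall s' t' : R, 0 < s' -> 0 < t' ->
      critical_on_linkage (energy q1 q2 q4 s' t') P -> s' = s /\ t' = t.
Proof.
  intros _ Hq1 Hq2 Hq4 _ Hcvx.
  destruct (critical_iff_pos_system q1 q2 q4 P Hq1 Hq2 Hq4 Hcvx)
    as (A & B & C & A' & B' & D & HA & HB & HC & HA' & HB' & HD & Hcrit).
  destruct (pos_system_unique_solution A B C A' B' D HA HB HC HA' HB' HD)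
    as (s & t & (Hs & Ht & E1 & E2) & Huniq).
  exists s, t. split.
  - split; [exact Hs | split; [exact Ht | apply Hcrit; auto]].
  - intros s' t' Hs' Ht' Hc. apply Hcrit in Hc as [E1' E2']. auto.
Qed.
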